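(* Let $c\in\,]0,1[$ and $r=1-c$. For every real $t\ge 1$: (i) for all $\lambda\in[0,r]$, $\lambda^{2t}\le \lambda e^{-ct}$; (ii) for all $\lambda\in[r,1]$, $\lambda^{2t}\le e^{(\lambda-1)t}-e^{-ct}+\lambda e^{-ct}$; (iii) for all $\lambda\in[0,1]$, $e^{-2t}\big(e^{2\lambda t}-1\big)\le 2\lambda t e^{-t}+\lambda^{t}$. *)

From Stdlib Require Import Reals.
Open Scope R_scope.

(* Real power x^y for x >= 0: 0^y = 0 (used only with y > 0),
   x^y = exp (y ln x) for x > 0.  (Stdlib's Rpower gives 0^y = 1,
   which is the wrong convention at x = 0.) *)
Definition rpow (x y : R) : R := if Rle_dec x 0 then 0 else Rpower x y.

(* (i) and (ii) reduce to one estimate: if 0 < l <= exp (-s) with s >= 0, then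
   l^(2t) = l * l^(2t-1) <= l * exp (-s t), because 2t - 1 >= t.  For (i) take
   s = c, using 1 - c <= exp (-c); for (ii) take s = 1 - l, and then
   exp (-c t) <= exp ((l-1) t) makes the extra terms nonnegative.
   For (iii), if l <= 1/2 use exp x - 1 <= x exp x with x = 2 l t and
   exp ((2l - 2) t) <= exp (-t); if l >= 1/2 use ln l >= 2 (l - 1), so that
   exp (-2t) exp (2lt) <= l^t. *)
From Stdlib Require Import Reals Lra.
Open Scope R_scope.

Lemma exp_le (x y : R) : x <= y -> exp x <= exp y.
Proof. intros [H | ->]; [left; apply exp_increasing | right]; auto. Qed.

Lemma ln_le_ln (x y : R) : 0 < x -> x <= y -> ln x <= ln y.
Proof. intros Hx [H | ->]; [left; apply ln_increasing | right]; auto. Qed.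

Lemma rpow_gt0E (l y : R) : 0 < l -> rpow l y = exp (y * ln l).
Proof. intros Hl. unfold rpow, Rpower. destruct (Rle_dec l 0); [lra | reflexivity]. Qed.

Lemma rpow_ge0 (l y : R) : 0 <= rpow l y.
Proof. unfold rpow, Rpower. destruct (Rle_dec l 0); [lra | left; apply exp_pos]. Qed.

Lemma rpow0l (y : R) : rpow 0 y = 0.
Proof. unfold rpow. destruct (Rle_dec 0 0); lra. Qed.

Lemma one_sub_le_exp_opp (x : R) : 1 - x <= exp (- x).
Proof. pose proof (exp_ineq1_le (- x)). lra. Qed.

Lemma exp_sub1_le_mul_exp (x : R) : exp x - 1 <= x * exp x.
Proof.
  assert (Hinv : exp (- x) * exp x = 1).
  { rewrite <- exp_plus. replace (- x + x) with 0 by ring. apply exp_0. }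
  pose proof (one_sub_le_exp_opp x). pose proof (exp_pos x). nra.
Qed.

Lemma ln_ge_twice_sub1 (l : R) : 1 / 2 <= l <= 1 -> 2 * (l - 1) <= ln l.
Proof.
  intros [Hl0 Hl1].
  assert (Hln : 1 - / l <= ln l).
  { pose proof (one_sub_le_exp_opp (ln l)) as H.
    rewrite <- ln_Rinv, exp_ln in H by (try apply Rinv_0_lt_compat; lra). lra. }
  assert (Hinv : l * / l = 1) by (field; lra).
  assert (Hinv2 : / l <= 2).
  { replace 2 with (/ (1 / 2)) by field. apply Rinv_le_contravar; lra. }
  (* 1 - 1/l - 2 (l - 1) = (1 - l) (2 - 1/l) *)
  assert (0 <= (1 - l) * (2 - / l)) by (apply Rmult_le_pos; lra).
  nra.
Qed.

Lemma rpow_2mul_le_mul_exp (l s t : R) :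
  1 <= t -> 0 < l -> 0 <= s -> l <= exp (- s) ->
  rpow l (2 * t) <= l * exp (- s * t).
Proof.
  intros Ht Hl Hs Hle. rewrite rpow_gt0E by lra.
  assert (Hln : ln l <= - s) by (rewrite <- (ln_exp (- s)); apply ln_le_ln; auto).
  replace (l * exp (- s * t)) with (exp (ln l + - s * t))
    by (rewrite exp_plus, exp_ln; auto).
  apply exp_le. nra.
Qed.

Lemma lemma2_i (c t l : R) : 0 < c -> 1 <= t -> 0 <= l <= 1 - c ->
  rpow l (2 * t) <= l * exp (- c * t).
Proof.
  intros Hc Ht [[Hl0 | <-] Hl1].
  - apply rpow_2mul_le_mul_exp; try lra.
    pose proof (one_sub_le_exp_opp c). lra.
  - rewrite rpow0l. lra.
Qed.

Lemma lemma2_ii (c t l : R) : c < 1 -> 1 <= t -> 1 - c <= l <= 1 ->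
  rpow l (2 * t) <= exp ((l - 1) * t) - exp (- c * t) + l * exp (- c * t).
Proof.
  intros Hc Ht [Hl0 Hl1].
  pose proof (rpow_2mul_le_mul_exp l (1 - l) t Ht ltac:(lra) ltac:(lra)
                ltac:(pose proof (one_sub_le_exp_opp (1 - l)); lra)) as Hpow.
  replace (- (1 - l) * t) with ((l - 1) * t) in Hpow by ring.
  assert (Hexp : exp (- c * t) <= exp ((l - 1) * t)) by (apply exp_le; nra).
  pose proof (exp_pos ((l - 1) * t)). nra.
Qed.

Lemma lemma2_iii_small_l (t l : R) : 1 <= t -> 0 <= l <= 1 / 2 ->
  exp (- 2 * t) * (exp (2 * l * t) - 1) <= 2 * l * t * exp (- t).
Proof.
  intros Ht [Hl0 Hl1].
  set (x := 2 * l * t).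
  assert (Hx : 0 <= x) by (unfold x; nra).
  assert (Hshift : exp (- 2 * t) * exp x <= exp (- t)).
  { rewrite <- exp_plus. apply exp_le. unfold x. nra. }
  pose proof (exp_sub1_le_mul_exp x). pose proof (exp_pos (- 2 * t)). nra.
Qed.

Lemma lemma2_iii_large_l (t l : R) : 1 <= t -> 1 / 2 <= l <= 1 ->
  exp (- 2 * t) * (exp (2 * l * t) - 1) <= rpow l t.
Proof.
  intros Ht Hl.
  rewrite rpow_gt0E by lra.
  assert (Hshift : exp (- 2 * t) * exp (2 * l * t) <= exp (t * ln l)).
  { rewrite <- exp_plus. apply exp_le. pose proof (ln_ge_twice_sub1 l Hl). nra. }
  pose proof (exp_pos (- 2 * t)). lra.
Qed.

Theorem lemma2 (c : R) (hc0 : 0 < c) (hc1 : c < 1) (t : R) (ht : 1 <= t) :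
  let r := 1 - c in
  (forall l : R, 0 <= l <= r -> rpow l (2 * t) <= l * exp (- c * t)) /\
  (forall l : R, r <= l <= 1 ->
     rpow l (2 * t) <= exp ((l - 1) * t) - exp (- c * t) + l * exp (- c * t)) /\
  (forall l : R, 0 <= l <= 1 ->
     exp (- 2 * t) * (exp (2 * l * t) - 1) <= 2 * l * t * exp (- t) + rpow l t).
Proof.
  intros r; split; [| split]; intros l Hl.
  - exact (lemma2_i c t l hc0 ht Hl).
  - exact (lemma2_ii c t l hc1 ht Hl).
  - pose proof (rpow_ge0 l t).
    assert (0 <= 2 * l * t * exp (- t)) 
      by (apply Rmult_le_pos; [nra | left; apply exp_pos]).
    destruct (Rle_dec l (1 / 2)).
    + pose proof (lemma2_iii_small_l t l ht ltac:(lra)). lra.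
    + pose proof (lemma2_iii_large_l t l ht ltac:(lra)). lra.
Qed.
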